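(* Assume the setting and Algorithm 1 described in the context, with $|Q|\ge2$. Take parameters $P=\Theta(\frac{M^2}{\varepsilon_1^2}\log|Q|)$, $R=32M/\varepsilon_1$ and $T=\Theta(\frac{R}{\varepsilon_2}\log|Q|)$, with suitable absolute constants. Then with probability at least $7/8$ the distribution $\hat q$ returned by Algorithm 1 satisfies $\mathrm{Loss}(\hat q)\le\mathrm{Loss}(q^* )+\varepsilon_1$.
   Context: Setting. $X$ is a countable set and $p$ is a probability distribution on $X$. For a distribution $q$ on $X$, $q_x$ is the mass of $x$, $\mathrm{supp}(q)=\{x:q_x>0\}$, and $q(A)=\sum_{x\in A}q_x$. An invalidity function $\mathrm{Inv}:X\to\{0,1\}$ is given with $\mathrm{Inv}(x)=0$ for all $x\in\mathrm{supp}(p)$. For a distribution $q$, $\mathrm{Inv}(q)=\mathbb{E}_{x\sim q}[\mathrm{Inv}(x)]$. Fix $M>0$ and a monotone non-increasing function $L:[0,1]\to[0,M]$, and set $\mathrm{Loss}(q)=\mathbb{E}_{x\sim p}[L(q_x)]$. The learner may draw i.i.d. samples from $p$ and may query $\mathrm{Inv}(x)$ at any point $x$. $Q$ is a finite family of probability distributions on $X$ containing at least one $q$ with $\mathrm{Inv}(q)=0$. $q^*$ denotes a minimizer of $\mathrm{Loss}(q)$ over $\{q\in Q:\mathrm{Inv}(q)=0\}$. Oracle. For a finite multiset $X_P$ and a finite set $X_N\subseteq X$, $\mathrm{Oracle}(X_P,X_N)$ returns some $q\in Q$ minimizing $\frac1{|X_P|}\sum_{x\in X_P}L(q_x)$ among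 all $q\in Q$ with $\mathrm{supp}(q)\cap X_N=\emptyset$. Algorithm 1 (parameters $P,R,T$): (1) Draw a multiset $X_P$ of $P$ i.i.d. samples from $p$. Set $X_N=\emptyset$. (2) For $i=1,\dots,R$: let $q^i=\mathrm{Oracle}(X_P,X_N)$. Draw $T$ i.i.d. samples from $q^i$ and query the invalidity of each. If none is invalid, output $q^i$ and stop. Otherwise add all invalid ones to $X_N$. (3) If no output has been produced after $R$ rounds, choose $i$ uniformly from $\{1,\dots,R\}$ and let $A^i=\{x:\exists j>i,\ x\in\mathrm{supp}(q^j)\}$. Output the distribution $\hat q$ that draws $x\sim q^i$ and returns $x$ if $x\in A^i$, and otherwise returns a fixed point $x^*$ with $\mathrm{Inv}(x^* )=0$. *)

(* classical reals. The countable set X is modelled by nat. *)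
From Stdlib Require Import Reals Lra List Permutation Classical ClassicalEpsilon.
Import ListNotations.
Open Scope R_scope.

(* value of a (convergent) series; arbitrary if it does not converge.
   All series used below have nonnegative bounded terms, hence converge. *)
Definition series (u : nat -> R) : R :=
  epsilon (inhabits 0) (fun l => infinite_sum u l).

Definition isDist (d : nat -> R) : Prop :=
  (forall x, 0 <= d x) /\ infinite_sum d 1.

Definition indic (b : bool) : R := if b then 1 else 0.

Definition InvQ (Inv : nat -> bool) (q : nat -> R) : R :=
  series (fun x => q x * indic (Inv x)).

Definition Loss (p : nat -> R) (L : R -> R) (q : nat -> R) : R :=
  series (fun x => p x * L (q x)).

Definition nceil (x : R) : nat := Z.to_nat (- Int_part (- x)).

Definition emp_loss (L : R -> R) (XP : list nat) (q : nat -> R) : R :=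
  / INR (length XP) * fold_right (fun x acc => L (q x) + acc) 0 XP.

Definition feasible (Qs : list (nat -> R)) (XN : list nat) (q : nat -> R) : Prop :=
  In q Qs /\ forall x, In x XN -> ~ (0 < q x).

Definition is_oracle (L : R -> R) (Qs : list (nat -> R))
    (orc : list nat -> list nat -> (nat -> R)) : Prop :=
  (forall XP XN, (exists q, feasible Qs XN q) ->
     feasible Qs XN (orc XP XN) /\
     forall q, feasible Qs XN q -> emp_loss L XP (orc XP XN) <= emp_loss L XP q)
  /\
  (forall XP XP' XN XN', Permutation XP XP' -> (forall x, In x XN <-> In x XN') ->
     orc XP XN = orc XP' XN').

Inductive prog (A : Type) : Type :=
| Ret : A -> prog A
| Draw : (nat -> R) -> (nat -> prog A) -> prog A.
Arguments Ret {A} _.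
Arguments Draw {A} _ _.

(* PrEv E t v : the probability that program t returns an outcome satisfying E is v *)
Inductive PrEv {A : Type} (E : A -> Prop) : prog A -> R -> Prop :=
| PrRet1 : forall a, E a -> PrEv E (Ret a) 1
| PrRet0 : forall a, ~ E a -> PrEv E (Ret a) 0
| PrDraw : forall d k (v : nat -> R) l,
    (forall x, PrEv E (k x) (v x)) ->
    infinite_sum (fun x => d x * v x) l ->
    PrEv E (Draw d k) l.

Fixpoint draws {A : Type} (d : nat -> R) (n : nat) (k : list nat -> prog A) : prog A :=
  match n with
  | O => k []
  | S n' => Draw d (fun x => draws d n' (fun s => k (x :: s)))
  end.

Definition unif (n : nat) : nat -> R :=
  fun i => if Nat.ltb i n then / INR n else 0.

(* hist = [q^1; ...; q^R] (0-based); A^i = {x : exists j > i, x in supp(q^j)} *)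
Definition inA (hist : list (nat -> R)) (i x : nat) : Prop :=
  exists j, (i < j < length hist)%nat /\ 0 < nth j hist (fun _ => 0) x.

(* hat q : draw x ~ q^i, return x if x in A^i, else return xstar *)
Definition hatq (hist : list (nat -> R)) (xstar : nat) (i : nat) : nat -> R :=
  fun x =>
    let qi := nth i hist (fun _ => 0) in
    (if excluded_middle_informative (inA hist i x) then qi x else 0)
    + (if Nat.eq_dec x xstar then
         series (fun y => if excluded_middle_informative (inA hist i y) then 0 else qi y)
       else 0).

Fixpoint rounds (Inv : nat -> bool) (orc : list nat -> list nat -> (nat -> R))
    (XP : list nat) (xstar Rn T : nat) (fuel : nat)
    (XN : list nat) (hist : list (nat -> R)) : prog (nat -> R) :=
  match fuel with
  | O => Draw (unif Rn) (fun i => Ret (hatq hist xstar i))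
  | S f =>
      let q := orc XP XN in
      draws q T (fun s =>
        if forallb (fun x => negb (Inv x)) s then Ret q
        else rounds Inv orc XP xstar Rn T f (XN ++ filter Inv s) (hist ++ [q]))
  end.

Definition algorithm1 (p : nat -> R) (Inv : nat -> bool)
    (orc : list nat -> list nat -> (nat -> R)) (xstar P Rn T : nat) : prog (nat -> R) :=
  draws p P (fun XP => rounds Inv orc XP xstar Rn T Rn [] []).

(* With high probability the sample X_P is representative: by Hoeffding's inequality, applied to
   each of the |Q| + 1 losses involved and combined by a union bound, the empirical loss
   underestimates no Loss(q) by more than eps1/4 and overestimates Loss(q* ) by at most eps1/4;
   with P >= 1024 (M/eps1)^2 ln|Q| the failure probability is at most (|Q| + 1) |Q|^-8 <= 1/15.
   Since X_N only ever receives invalid points, q* stays feasible, so on a representative sample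
   every oracle answer q^i satisfies Loss(q^i) <= Loss(q* ) + eps1/2, and a round that stops is a
   success. Otherwise hat q differs from q^i only on the points that are "lost" at round i (in
   supp q^i but in no later support), which costs at most M p(lost_i); the lost sets of distinct
   rounds are disjoint, so by Markov's inequality p(lost_i) <= eps1/(2M) for all but a fraction
   2M/(eps1 R) <= 1/16 of the rounds i. The success probability is thus at least
   (15/16)(14/15) = 7/8. *)

From Stdlib Require Import Reals Lra Lia ZArith List Permutation Classical ClassicalEpsilon.
From Coquelicot Require Import Coquelicot.
Import ListNotations.
Open Scope R_scope.

(** * Series of bounded terms *)

Lemma series_is_series u l : is_series u l -> series u = l.
Proof.
  intros Hl. unfold series.
  assert (Hsum : infinite_sum u (epsilon (inhabits 0) (fun l => infinite_sum u l))).
  { apply epsilon_spec. exists l. now apply is_series_Reals. }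
  apply is_series_Reals, is_series_unique in Hsum.
  now rewrite <- Hsum; apply is_series_unique.
Qed.

Lemma series_Series u : ex_series u -> series u = Series u.
Proof. intros Hu. apply series_is_series, Series_correct, Hu. Qed.

Lemma isDist_ex_series d : isDist d -> ex_series d.
Proof. intros [_ Hd]. exists 1. now apply is_series_Reals. Qed.

Lemma isDist_Series d : isDist d -> Series d = 1.
Proof. intros [_ Hd]. now apply is_series_unique, is_series_Reals. Qed.

Lemma ex_series_Rabs_le (a b : nat -> R) :
  (forall n, Rabs (a n) <= b n) -> ex_series b -> ex_series a.
Proof. exact (@ex_series_le _ R_CompleteNormedModule a b). Qed.

Lemma ex_series_scal (c : R) (a : nat -> R) :
  ex_series a -> ex_series (fun n => c * a n).
Proof. exact (@ex_series_scal_l _ R_NormedModule c a). Qed.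

Lemma ex_series_add (a b : nat -> R) :
  ex_series a -> ex_series b -> ex_series (fun n => a n + b n).
Proof. exact (@ex_series_plus _ R_NormedModule a b). Qed.

Lemma ex_series_weighted d g B : isDist d -> (forall x, Rabs (g x) <= B) ->
  ex_series (fun x => d x * g x).
Proof.
  intros Hd Hg. apply (ex_series_Rabs_le _ (fun x => B * d x)).
  - intros x. destruct Hd as [Hd0 _]. rewrite Rabs_mult, (Rabs_right (d x)) by (apply Rle_ge, Hd0).
    rewrite Rmult_comm. apply Rmult_le_compat_r; auto.
  - now apply ex_series_scal, isDist_ex_series.
Qed.

Fixpoint sum_below (f : nat -> R) (n : nat) : R :=
  match n with O => 0 | S n => sum_below f n + f n end.

Lemma sum_below_ext f g n : (forall i, (i < n)%nat -> f i = g i) -> sum_below f n = sum_below g n.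
Proof.
  induction n; intros Hfg; simpl; auto.
  rewrite (Hfg n) by lia. rewrite IHn; [reflexivity|]. intros i Hi. apply Hfg. lia.
Qed.

Lemma sum_below_const c n : sum_below (fun _ => c) n = INR n * c.
Proof. induction n; simpl sum_below; [simpl; ring|]. rewrite IHn, S_INR. ring. Qed.

Lemma sum_below_scal c f n : sum_below (fun i => c * f i) n = c * sum_below f n.
Proof. induction n; simpl; [ring|]. rewrite IHn. ring. Qed.

Lemma sum_below_le f g n : (forall i, (i < n)%nat -> f i <= g i) -> sum_below f n <= sum_below g n.
Proof.
  induction n; intros Hfg; simpl; [lra|].
  assert (f n <= g n) by (apply Hfg; lia).
  assert (sum_below f n <= sum_below g n) by (apply IHn; intros; apply Hfg; lia).
  lra.
Qed.

Lemma sum_below_plus f g n : sum_below (fun i => f i + g i) n = sum_below f n + sum_below g n.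
Proof. induction n; simpl; [ring|]. rewrite IHn. ring. Qed.

Lemma sum_below_nonneg f n : (forall i, 0 <= f i) -> 0 <= sum_below f n.
Proof. intros Hf; induction n; simpl; [lra|]. specialize (Hf n); lra. Qed.

Lemma is_series_finite_support u N : (forall n, (N <= n)%nat -> u n = 0) ->
  is_series u (sum_below u N).
Proof.
  intros Hu.
  assert (Hstable : forall n, (N <= n)%nat -> sum_below u n = sum_below u N).
  { intros n Hn. induction Hn; auto. simpl. rewrite IHHn, Hu by lia. ring. }
  assert (Hpartial : forall n, sum_f_R0 u n = sum_below u (S n)).
  { induction n; simpl in *; [ring|]. rewrite IHn. reflexivity. }
  apply is_series_Reals. intros eps Heps. exists N. intros n Hn.
  unfold R_dist. rewrite Hpartial, Hstable by lia. rewrite Rminus_diag, Rabs_R0. lra.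
Qed.

Lemma Series_zero : Series (fun _ => 0) = 0.
Proof. apply is_series_unique, (is_series_finite_support _ 0). reflexivity. Qed.

Lemma Series_le_ex (a b : nat -> R) : ex_series a -> ex_series b ->
  (forall n, a n <= b n) -> Series a <= Series b.
Proof.
  intros Ha Hb Hab.
  assert (Hdiff : 0 <= Series (fun n => b n - a n)).
  { rewrite <- Series_zero. apply Series_le.
    - intros n. specialize (Hab n). lra.
    - exact (@ex_series_minus _ R_NormedModule b a Hb Ha). }
  rewrite Series_minus in Hdiff; auto. lra.
Qed.

Lemma Series_point k c : Series (fun n => if Nat.eq_dec n k then c else 0) = c.
Proof.
  set (F := fun n => if Nat.eq_dec n k then c else 0).
  assert (HF : is_series F (sum_below F (S k))).
  { apply is_series_finite_support. intros n Hn. unfold F.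
    destruct (Nat.eq_dec n k); [lia|reflexivity]. }
  rewrite (is_series_unique _ _ HF). unfold F. simpl.
  destruct (Nat.eq_dec k k) as [_|]; [|congruence].
  rewrite (sum_below_ext _ (fun _ => 0)), sum_below_const; [ring|].
  intros i Hi. destruct (Nat.eq_dec i k); [lia|reflexivity].
Qed.

Lemma Series_ge_term (a : nat -> R) k : (forall n, 0 <= a n) -> ex_series a -> a k <= Series a.
Proof.
  intros Ha Hex. rewrite <- (Series_point k (a k)) at 1. apply Series_le; auto.
  intros n. destruct (Nat.eq_dec n k); subst; split; auto; lra.
Qed.

Lemma isDist_le_1 d x : isDist d -> 0 <= d x <= 1.
Proof.
  intros Hd. split; [apply Hd|].
  rewrite <- (isDist_Series d Hd). apply Series_ge_term; [apply Hd|]. now apply isDist_ex_series.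
Qed.

Lemma Series_weighted_const d c : isDist d -> Series (fun x => d x * c) = c.
Proof.
  intros Hd. rewrite (Series_ext _ (fun x => c * d x)) by (intros; ring).
  rewrite Series_scal_l, isDist_Series by auto. ring.
Qed.

Lemma Series_weighted_bounds d g a b : isDist d -> (forall x, a <= g x <= b) ->
  a <= Series (fun x => d x * g x) <= b.
Proof.
  intros Hd Hg. pose proof Hd as [Hd0 _].
  assert (Hbound : forall c, Rabs c <= Rabs a + Rabs b -> ex_series (fun x => d x * c)).
  { intros c _. apply (ex_series_weighted d (fun _ => c) (Rabs c)); auto. intros; lra. }
  assert (Hex : ex_series (fun x => d x * g x)).
  { apply (ex_series_weighted d g (Rabs a + Rabs b)); auto. intros x. specialize (Hg x).
    unfold Rabs; repeat destruct Rcase_abs; lra. }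
  split.
  - rewrite <- (Series_weighted_const d a Hd) at 1. apply Series_le_ex; auto.
    + apply Hbound. unfold Rabs; repeat destruct Rcase_abs; lra.
    + intros x. apply Rmult_le_compat_l; auto. apply Hg.
  - rewrite <- (Series_weighted_const d b Hd). apply Series_le_ex; auto.
    + apply Hbound. unfold Rabs; repeat destruct Rcase_abs; lra.
    + intros x. apply Rmult_le_compat_l; auto. apply Hg.
Qed.

Lemma Series_weighted_sub_const d g c B : isDist d -> (forall x, Rabs (g x) <= B) ->
  Series (fun x => d x * (g x - c)) = Series (fun x => d x * g x) - c.
Proof.
  intros Hd Hg. rewrite (Series_ext _ (fun x => d x * g x - d x * c)) by (intros; ring).
  rewrite Series_minus, Series_weighted_const; auto.
  - now apply (ex_series_weighted d g B).
  - apply (ex_series_weighted d (fun _ => c) (Rabs c)); auto. intros; lra.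
Qed.

Lemma Series_sum_below (f : nat -> nat -> R) n : (forall i, ex_series (f i)) ->
  Series (fun x => sum_below (fun i => f i x) n) = sum_below (fun i => Series (f i)) n.
Proof.
  intros Hf.
  assert (Hex : forall m, ex_series (fun x => sum_below (fun i => f i x) m)).
  { induction m; simpl.
    - exists 0. apply (is_series_finite_support _ 0). reflexivity.
    - now apply ex_series_add. }
  induction n; simpl; [apply Series_zero|]. now rewrite Series_plus, IHn.
Qed.

Lemma unif_is_series n a : (1 <= n)%nat ->
  is_series (fun i => unif n i * a i) (sum_below a n / INR n).
Proof.
  intros Hn.
  replace (sum_below a n / INR n) with (sum_below (fun i => unif n i * a i) n).
  - apply is_series_finite_support. intros k Hk. unfold unif.
    replace (Nat.ltb k n) with false by (symmetry; apply Nat.ltb_ge; lia). ring.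
  - unfold Rdiv. rewrite Rmult_comm, <- sum_below_scal. apply sum_below_ext.
    intros i Hi. unfold unif. replace (Nat.ltb i n) with true by (symmetry; apply Nat.ltb_lt; lia).
    reflexivity.
Qed.

Lemma isDist_unif n : (1 <= n)%nat -> isDist (unif n).
Proof.
  intros Hn. split.
  - intros x. unfold unif. destruct Nat.ltb; [|lra].
    left; apply Rinv_0_lt_compat, lt_0_INR; lia.
  - apply is_series_Reals. pose proof (unif_is_series n (fun _ => 1) Hn) as Hs.
    rewrite sum_below_const in Hs.
    replace (INR n * 1 / INR n) with 1 in Hs by (field; apply not_0_INR; lia).
    eapply is_series_ext; [|exact Hs]. intros; simpl; ring.
Qed.

Definition ind (P : Prop) : R := if excluded_middle_informative P then 1 else 0.

Lemma ind_bounds P : 0 <= ind P <= 1.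
Proof. unfold ind; destruct excluded_middle_informative; lra. Qed.

Lemma ind_true (P : Prop) : P -> ind P = 1.
Proof. unfold ind; destruct excluded_middle_informative; tauto. Qed.

Lemma ind_false (P : Prop) : ~ P -> ind P = 0.
Proof. unfold ind; destruct excluded_middle_informative; tauto. Qed.

Definition sum_list {A} (g : A -> R) (l : list A) : R := fold_right (fun a acc => g a + acc) 0 l.

Definition prod_list {A} (g : A -> R) (l : list A) : R := fold_right (fun a acc => g a * acc) 1 l.

Lemma sum_list_cons {A} (g : A -> R) a l : sum_list g (a :: l) = g a + sum_list g l.
Proof. reflexivity. Qed.

Lemma sum_list_le_length {A} (g : A -> R) l b : (forall a, In a l -> g a <= b) ->
  sum_list g l <= INR (length l) * b.
Proof.
  induction l as [|a l IH]; intros Hg; [simpl; lra|].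
  rewrite sum_list_cons; cbn [length]; rewrite S_INR.
  assert (g a <= b) by (apply Hg; now left).
  assert (sum_list g l <= INR (length l) * b) by (apply IH; intros; apply Hg; now right).
  lra.
Qed.

Lemma sum_list_ge_length {A} (g : A -> R) l b : (forall a, b <= g a) ->
  INR (length l) * b <= sum_list g l.
Proof.
  intros Hg. induction l as [|a l IH]; [simpl; lra|].
  rewrite sum_list_cons; cbn [length]; rewrite S_INR. specialize (Hg a). lra.
Qed.

Lemma sum_list_ge_mem {A} (g : A -> R) l a : (forall a, 0 <= g a) -> In a l -> g a <= sum_list g l.
Proof.
  intros Hg Ha. induction l as [|b l IH]; [destruct Ha|].
  rewrite sum_list_cons. destruct Ha as [<-|Ha].
  - pose proof (sum_list_ge_length g l 0 Hg). lra.
  - specialize (IH Ha). specialize (Hg b). lra.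
Qed.

Lemma sum_list_sub_const {A} (g : A -> R) c l :
  sum_list (fun a => g a - c) l = sum_list g l - INR (length l) * c.
Proof.
  induction l; [simpl; ring|].
  rewrite !sum_list_cons, IHl; cbn [length]; rewrite S_INR. ring.
Qed.

Lemma sum_list_const_sub {A} (g : A -> R) c l :
  sum_list (fun a => c - g a) l = INR (length l) * c - sum_list g l.
Proof.
  induction l; [simpl; ring|].
  rewrite !sum_list_cons, IHl; cbn [length]; rewrite S_INR. ring.
Qed.

Lemma sum_list_scal {A} (g : A -> R) c l : sum_list (fun a => c * g a) l = c * sum_list g l.
Proof. induction l; [simpl; ring|]. rewrite !sum_list_cons, IHl. ring. Qed.

Lemma prod_list_exp {A} (g : A -> R) l : prod_list (fun a => exp (g a)) l = exp (sum_list g l).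
Proof.
  induction l; [apply eq_sym, exp_0|].
  rewrite sum_list_cons, exp_plus, <- IHl. reflexivity.
Qed.

(** * Expectations over i.i.d. samples *)

(* Exponential weights such as [prod_list (fun x => exp (lam * Z x))] are bounded only on lists
   of a fixed length, which are the only ones [Eiid d n] looks at. *)
Definition bounded_on (n : nat) (f : list nat -> R) : Prop :=
  exists B, forall s, length s = n -> Rabs (f s) <= B.

Lemma bounded_on_between n f a b : (forall s, a <= f s <= b) -> bounded_on n f.
Proof.
  intros Hf. exists (Rabs a + Rabs b). intros s _. specialize (Hf s).
  unfold Rabs; repeat destruct Rcase_abs; lra.
Qed.

Lemma bounded_on_cons n f x : bounded_on (S n) f -> bounded_on n (fun s => f (x :: s)).
Proof. intros [B Hf]. exists B. intros s Hs. apply Hf. simpl; now rewrite Hs. Qed.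

Fixpoint Eiid (d : nat -> R) (n : nat) (f : list nat -> R) : R :=
  match n with
  | O => f nil
  | S n => Series (fun x => d x * Eiid d n (fun s => f (x :: s)))
  end.

Section Iid_expectation.
Variable d : nat -> R.
Hypothesis Hd : isDist d.

Lemma Eiid_abs_le n f B : (forall s, length s = n -> Rabs (f s) <= B) -> Rabs (Eiid d n f) <= B.
Proof.
  revert f. induction n; intros f Hf; simpl; [now apply Hf|].
  apply Rabs_le, Series_weighted_bounds; auto.
  intros x. apply Rabs_le_between, IHn. intros s Hs. apply Hf. simpl; now rewrite Hs.
Qed.

Lemma ex_series_Eiid n f : bounded_on (S n) f ->
  ex_series (fun x => d x * Eiid d n (fun s => f (x :: s))).
Proof.
  intros [B Hf]. apply (ex_series_weighted d _ B); auto.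
  intros x. apply Eiid_abs_le. intros s Hs. apply Hf. simpl; now rewrite Hs.
Qed.

Lemma Eiid_le n f g : bounded_on n f -> bounded_on n g ->
  (forall s, length s = n -> f s <= g s) -> Eiid d n f <= Eiid d n g.
Proof.
  revert f g. induction n; intros f g Hf Hg Hfg; simpl; [now apply Hfg|].
  apply Series_le_ex; try now apply ex_series_Eiid.
  intros x. apply Rmult_le_compat_l; [apply Hd|].
  apply IHn; try now apply bounded_on_cons.
  intros s Hs. apply Hfg. simpl; now rewrite Hs.
Qed.

Lemma Eiid_scal n f c : Eiid d n (fun s => c * f s) = c * Eiid d n f.
Proof.
  revert f. induction n; intros f; simpl; auto.
  rewrite <- Series_scal_l. apply Series_ext. intros x.
  rewrite (IHn (fun s => f (x :: s))). ring.
Qed.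

Lemma Eiid_const n c : Eiid d n (fun _ => c) = c.
Proof. induction n; simpl; auto. rewrite IHn. now apply Series_weighted_const. Qed.

Lemma Eiid_plus n f g : bounded_on n f -> bounded_on n g ->
  Eiid d n (fun s => f s + g s) = Eiid d n f + Eiid d n g.
Proof.
  revert f g. induction n; intros f g Hf Hg; simpl; auto.
  rewrite <- Series_plus; try now apply ex_series_Eiid.
  apply Series_ext. intros x.
  rewrite (IHn (fun s => f (x :: s)) (fun s => g (x :: s))); try now apply bounded_on_cons. ring.
Qed.

Lemma Eiid_prod_list n g : Eiid d n (prod_list g) = Series (fun x => d x * g x) ^ n.
Proof.
  induction n; simpl; auto.
  rewrite (Series_ext _ (fun x => Series (fun x => d x * g x) ^ n * (d x * g x))).
  - rewrite Series_scal_l. ring.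
  - intros x. change (fun s => prod_list g (x :: s)) with (fun s => g x * prod_list g s).
    rewrite Eiid_scal, IHn. ring.
Qed.

Lemma Eiid_sum_list {A} n (h : A -> list nat -> R) l : (forall a s, 0 <= h a s <= 1) ->
  Eiid d n (fun s => sum_list (fun a => h a s) l) = sum_list (fun a => Eiid d n (h a)) l.
Proof.
  intros Hh. induction l as [|a l IH]; [exact (Eiid_const n 0)|].
  rewrite sum_list_cons, <- IH. apply Eiid_plus.
  - apply (bounded_on_between _ _ 0 1). auto.
  - apply (bounded_on_between _ _ 0 (INR (length l))). intros s. split.
    + rewrite <- (Rmult_0_r (INR (length l))). apply sum_list_ge_length. intros; apply Hh.
    + rewrite <- (Rmult_1_r (INR (length l))). apply sum_list_le_length. intros; apply Hh.
Qed.

Lemma Eiid_union_bound n (G : list nat -> Prop) (Es : list (list nat -> Prop)) b :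
  (forall e, In e Es -> Eiid d n (fun s => ind (e s)) <= b) ->
  (forall s, ~ G s -> exists e, In e Es /\ e s) ->
  1 - INR (length Es) * b <= Eiid d n (fun s => ind (G s)).
Proof.
  intros Hb Hcover.
  set (failures := fun s => sum_list (fun e : list nat -> Prop => ind (e s)) Es).
  assert (Hf : forall s, 0 <= failures s <= INR (length Es)).
  { intros s. split.
    - rewrite <- (Rmult_0_r (INR (length Es))). apply sum_list_ge_length. intros; apply ind_bounds.
    - rewrite <- (Rmult_1_r (INR (length Es))). apply sum_list_le_length. intros; apply ind_bounds. }
  assert (Hpointwise : forall s, 1 + -1 * failures s <= ind (G s)).
  { intros s. destruct (classic (G s)) as [HG|HG].
    - rewrite ind_true by auto. specialize (Hf s). lra.
    - destruct (Hcover s HG) as [e [He Hes]].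
      assert (Hfail : ind (e s) <= failures s)
        by (apply (sum_list_ge_mem (fun e => ind (e s))); auto; intros; apply ind_bounds).
      rewrite ind_true in Hfail by auto. pose proof (ind_bounds (G s)). lra. }
  eapply Rle_trans; [|apply Eiid_le; [| |intros s _; apply Hpointwise]].
  - rewrite Eiid_plus, Eiid_const, Eiid_scal.
    + unfold failures. rewrite Eiid_sum_list by (intros; apply ind_bounds).
      pose proof (sum_list_le_length _ Es b Hb). lra.
    + apply (bounded_on_between _ _ 1 1). intros; lra.
    + apply (bounded_on_between _ _ (- INR (length Es)) 0). intros s. specialize (Hf s). lra.
  - apply (bounded_on_between _ _ (1 - INR (length Es)) 1). intros s. specialize (Hf s). lra.
  - apply (bounded_on_between _ _ 0 1). intros; apply ind_bounds.
Qed.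

End Iid_expectation.

(** * Success probabilities of randomized programs *)

Definition PrAtLeast {A} (E : A -> Prop) (t : prog A) (a : R) : Prop :=
  exists v, PrEv E t v /\ a <= v /\ 0 <= v <= 1.

Section Success_probability.
Context {A : Type} (E : A -> Prop).

Lemma PrAtLeast_weaken t a b : PrAtLeast E t a -> b <= a -> PrAtLeast E t b.
Proof. intros [v [Hv [Hav Hv01]]] Hba. exists v. repeat split; auto; lra. Qed.

Lemma PrAtLeast_Ret r : PrAtLeast E (Ret r) (ind (E r)).
Proof.
  unfold ind. destruct excluded_middle_informative as [Hr|Hr].
  - exists 1. repeat split; try lra. now constructor.
  - exists 0. repeat split; try lra. now constructor.
Qed.

Lemma PrAtLeast_Draw d k a : isDist d ->
  (forall x, PrAtLeast E (k x) (a x)) -> (forall x, 0 <= a x) ->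
  PrAtLeast E (Draw d k) (Series (fun x => d x * a x)).
Proof.
  intros Hd Hk Ha. pose proof Hd as [Hd0 _].
  destruct (choice (fun x v => PrEv E (k x) v /\ a x <= v /\ 0 <= v <= 1) Hk) as [v Hv].
  assert (Hex : ex_series (fun x => d x * v x)).
  { apply (ex_series_weighted d v 1); auto. intros x. destruct (Hv x) as [_ [_ Hb]].
    rewrite Rabs_right; lra. }
  exists (Series (fun x => d x * v x)). split; [|split].
  - apply (PrDraw E d k v); [apply Hv|]. now apply is_series_Reals, Series_correct.
  - apply Series_le; auto. intros x. destruct (Hv x) as [_ [Hax _]].
    split; [apply Rmult_le_pos|apply Rmult_le_compat_l]; auto.
  - apply Series_weighted_bounds; auto. intros x. apply Hv.
Qed.

Lemma PrAtLeast_Draw_const d k c : isDist d ->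
  (forall x, PrAtLeast E (k x) c) -> 0 <= c -> PrAtLeast E (Draw d k) c.
Proof.
  intros Hd Hk Hc. rewrite <- (Series_weighted_const d c Hd). now apply PrAtLeast_Draw.
Qed.

Lemma PrAtLeast_draws_const d n k c : isDist d ->
  (forall s, PrAtLeast E (k s) c) -> 0 <= c -> PrAtLeast E (draws d n k) c.
Proof.
  intros Hd. revert k. induction n; intros k Hk Hc; simpl; auto.
  apply PrAtLeast_Draw_const; auto.
Qed.

Lemma PrAtLeast_draws d n k f : isDist d ->
  (forall s, length s = n -> PrAtLeast E (k s) (f s)) -> (forall s, 0 <= f s <= 1) ->
  PrAtLeast E (draws d n k) (Eiid d n f).
Proof.
  intros Hd. revert k f. induction n; intros k f Hk Hf; simpl; [now apply Hk|].
  apply PrAtLeast_Draw; auto.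
  - intros x. apply IHn; auto. intros s Hs. apply Hk. simpl; now rewrite Hs.
  - intros x. rewrite <- (Eiid_const d Hd n 0). apply Eiid_le; auto.
    + apply (bounded_on_between _ _ 0 0). intros; lra.
    + apply (bounded_on_between _ _ 0 1). auto.
    + intros s _. apply Hf.
Qed.

End Success_probability.

(** * Hoeffding's inequality *)

Lemma exp_le_compat x y : x <= y -> exp x <= exp y.
Proof. intros [Hlt|Heq]; [left; now apply exp_increasing|subst; lra]. Qed.

Lemma exp_pow a n : exp a ^ n = exp (INR n * a).
Proof.
  induction n; simpl pow; [now rewrite Rmult_0_l, exp_0|].
  rewrite IHn, <- exp_plus, S_INR. f_equal. ring.
Qed.

(* From exp(-u) >= 1 - u: exp u <= 1 / (1 - u) <= 1 + u + 2 u^2. *)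
Lemma exp_le_quadratic u : Rabs u <= 1/2 -> exp u <= 1 + u + 2 * u ^ 2.
Proof.
  intros Hu. apply Rabs_le_between in Hu.
  pose proof (exp_ineq1_le (- u)) as Hexp.
  assert (Hinv : exp u * exp (- u) = 1) by (rewrite <- exp_plus, Rplus_opp_r; apply exp_0).
  pose proof (exp_pos u). pose proof (exp_pos (- u)).
  assert (exp u * (1 - u) <= 1) by nra.
  assert (1 <= (1 - u) * (1 + u + 2 * u ^ 2)) by nra.
  nra.
Qed.

Section Hoeffding.
Variables (p : nat -> R) (Z : nat -> R) (M : R).
Hypothesis Hp : isDist p.
Hypothesis HZ : forall x, Rabs (Z x) <= M.
Hypothesis Hmean : Series (fun x => p x * Z x) <= 0.

Lemma Z_le_M x : Z x <= M.
Proof. specialize (HZ x). apply Rabs_le_between in HZ. lra. Qed.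

Lemma mgf_le lam : 0 < lam -> lam * M <= 1/2 ->
  Series (fun x => p x * exp (lam * Z x)) <= exp (2 * lam ^ 2 * M ^ 2).
Proof.
  intros Hl HlM. pose proof Hp as [Hp0 _].
  set (c := 1 + 2 * lam ^ 2 * M ^ 2).
  assert (HZex : ex_series (fun x => p x * Z x)) by (apply (ex_series_weighted p Z M); auto).
  assert (Hcex : ex_series (fun x => p x * c)).
  { apply (ex_series_weighted p (fun _ => c) (Rabs c)); auto. intros; lra. }
  apply Rle_trans with (Series (fun x => p x * c + lam * (p x * Z x))).
  - apply Series_le_ex.
    + apply (ex_series_weighted p _ (exp (lam * M))); auto. intros x.
      rewrite Rabs_right by (apply Rle_ge, Rlt_le, exp_pos).
      apply exp_le_compat. apply Rmult_le_compat_l; [lra|apply Z_le_M].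
    + now apply ex_series_add, ex_series_scal.
    + intros x. specialize (HZ x). specialize (Hp0 x).
      assert (Hu : Rabs (lam * Z x) <= 1/2).
      { rewrite Rabs_mult, (Rabs_right lam) by lra.
        apply Rle_trans with (lam * M); auto. apply Rmult_le_compat_l; lra. }
      pose proof (exp_le_quadratic _ Hu).
      apply Rabs_le_between in HZ.
      assert ((lam * Z x) ^ 2 <= lam ^ 2 * M ^ 2)
        by (rewrite Rpow_mult_distr; apply Rmult_le_compat_l; nra).
      unfold c. nra.
  - rewrite Series_plus, Series_scal_l, Series_weighted_const by (auto; now apply ex_series_scal).
    pose proof (exp_ineq1_le (2 * lam ^ 2 * M ^ 2)). unfold c. nra.
Qed.

Lemma sum_list_Z_le s : sum_list Z s <= INR (length s) * M.
Proof. apply sum_list_le_length. intros; apply Z_le_M. Qed.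

Lemma chernoff_sum_tail lam t n : 0 < lam ->
  Eiid p n (fun s => ind (INR n * t < sum_list Z s))
    <= exp (- lam * INR n * t) * Series (fun x => p x * exp (lam * Z x)) ^ n.
Proof.
  intros Hl. rewrite <- Eiid_prod_list, <- Eiid_scal.
  apply Eiid_le; auto.
  - apply (bounded_on_between _ _ 0 1). intros; apply ind_bounds.
  - exists (exp (- lam * INR n * t + lam * (INR n * M))). intros s Hs.
    rewrite prod_list_exp, <- exp_plus, Rabs_right by (left; apply exp_pos).
    apply exp_le_compat. rewrite <- Hs, sum_list_scal.
    apply Rplus_le_compat_l, Rmult_le_compat_l; [lra|apply sum_list_Z_le].
  - intros s Hs. rewrite prod_list_exp, sum_list_scal, <- exp_plus.
    destruct (classic (INR n * t < sum_list Z s)).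
    + rewrite ind_true, <- exp_0 by auto. apply exp_le_compat. nra.
    + rewrite ind_false by auto. left; apply exp_pos.
Qed.

Lemma hoeffding_sum_tail t n : 0 < M -> 0 < t ->
  Eiid p n (fun s => ind (INR n * t < sum_list Z s)) <= exp (- INR n * t ^ 2 / (8 * M ^ 2)).
Proof.
  intros HM Ht. pose proof (pos_INR n) as Hn.
  destruct (Rle_lt_dec M t) as [HMt|HMt].
  - apply Rle_trans with 0; [|left; apply exp_pos].
    rewrite <- (Eiid_const p Hp n 0). apply Eiid_le; auto.
    + apply (bounded_on_between _ _ 0 1). intros; apply ind_bounds.
    + apply (bounded_on_between _ _ 0 0). intros; lra.
    + intros s Hs. rewrite ind_false; [lra|]. intros Hlt.
      pose proof (sum_list_Z_le s). rewrite Hs in *.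
      assert (INR n * M <= INR n * t) by (apply Rmult_le_compat_l; lra). lra.
  - (* [lam] minimises [- lam t + 2 lam^2 M^2]. *)
    set (lam := t / (4 * M ^ 2)).
    assert (Hl : 0 < lam) by (unfold lam; apply Rdiv_lt_0_compat; nra).
    assert (HlM : lam * M <= 1/2).
    { unfold lam. replace (t / (4 * M ^ 2) * M) with (t / (4 * M)) by (field; lra).
      apply Rmult_le_reg_r with (4 * M); [lra|].
      unfold Rdiv. rewrite Rmult_assoc, Rinv_l by lra. lra. }
    eapply Rle_trans; [apply (chernoff_sum_tail lam); auto|].
    apply Rle_trans with (exp (- lam * INR n * t) * exp (2 * lam ^ 2 * M ^ 2) ^ n).
    + apply Rmult_le_compat_l; [left; apply exp_pos|]. apply pow_incr. split; [|now apply mgf_le].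
      apply (Series_weighted_bounds p _ 0 (exp (lam * M))); auto.
      intros x; split; [left; apply exp_pos|].
      apply exp_le_compat, Rmult_le_compat_l; [lra|apply Z_le_M].
    + rewrite exp_pow, <- exp_plus. apply exp_le_compat. unfold lam. right. field. lra.
Qed.

End Hoeffding.

(* [emp_loss L s q] is convertible to [emp_mean (fun x => L (q x)) s]. *)
Definition emp_mean (g : nat -> R) (s : list nat) : R := / INR (length s) * sum_list g s.

Section Empirical_mean_tails.
Variables (p g : nat -> R) (B t : R) (n : nat).
Hypotheses (Hp : isDist p) (Hg : forall x, 0 <= g x <= B) (HB : 0 < B) (Ht : 0 < t).
Hypothesis Hn : (1 <= n)%nat.

Let mean := Series (fun x => p x * g x).

Lemma mean_bounds : 0 <= mean <= B.
Proof. now apply Series_weighted_bounds. Qed.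

Lemma sum_list_eq_emp_mean s : length s = n -> sum_list g s = INR n * emp_mean g s.
Proof.
  intros Hs. unfold emp_mean. rewrite Hs, <- Rmult_assoc, Rinv_r, Rmult_1_l; auto.
  apply not_0_INR. lia.
Qed.

Lemma emp_mean_above_tail :
  Eiid p n (fun s => ind (mean + t < emp_mean g s)) <= exp (- INR n * t ^ 2 / (8 * B ^ 2)).
Proof.
  pose proof mean_bounds as Hmean.
  eapply Rle_trans; [|apply (hoeffding_sum_tail p (fun x => g x - mean) B); auto].
  - apply Eiid_le; auto; try (apply (bounded_on_between _ _ 0 1); intros; apply ind_bounds).
    intros s Hs. destruct (classic (mean + t < emp_mean g s)) as [Habove|];
      [|rewrite ind_false by auto; apply ind_bounds].
    rewrite (ind_true (_ + _ < _)), ind_true; [lra| |auto]. rewrite sum_list_sub_const, sum_list_eq_emp_mean, Hs by auto.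
    pose proof (lt_0_INR n ltac:(lia)). nra.
  - intros x. specialize (Hg x). apply Rabs_le. lra.
  - rewrite (Series_weighted_sub_const p g mean B); auto; [unfold mean; lra|].
    intros x. specialize (Hg x). rewrite Rabs_right; lra.
Qed.

Lemma emp_mean_below_tail :
  Eiid p n (fun s => ind (emp_mean g s < mean - t)) <= exp (- INR n * t ^ 2 / (8 * B ^ 2)).
Proof.
  pose proof mean_bounds as Hmean.
  eapply Rle_trans; [|apply (hoeffding_sum_tail p (fun x => mean - g x) B); auto].
  - apply Eiid_le; auto; try (apply (bounded_on_between _ _ 0 1); intros; apply ind_bounds).
    intros s Hs. destruct (classic (emp_mean g s < mean - t)) as [Hbelow|];
      [|rewrite ind_false by auto; apply ind_bounds].
    rewrite (ind_true (_ < _ - _)), ind_true; [lra| |auto]. rewrite sum_list_const_sub, sum_list_eq_emp_mean, Hs by auto.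
    pose proof (lt_0_INR n ltac:(lia)). nra.
  - intros x. specialize (Hg x). apply Rabs_le. lra.
  - rewrite (Series_ext _ (fun x => - (p x * (g x - mean)))) by (intros; ring).
    rewrite Series_opp, (Series_weighted_sub_const p g mean B); auto; [unfold mean; lra|].
    intros x. specialize (Hg x). rewrite Rabs_right; lra.
Qed.

End Empirical_mean_tails.

(** * Analysis of Algorithm 1 *)

Lemma nceil_ge x : x <= INR (nceil x).
Proof.
  unfold nceil. destruct (base_Int_part (- x)) as [Hint _].
  assert (Hx : x <= IZR (- Int_part (- x))) by (rewrite opp_IZR; lra).
  destruct (Z_le_gt_dec 0 (- Int_part (- x))) as [Hpos|Hneg].
  - rewrite INR_IZR_INZ, Z2Nat.id; auto.
  - assert (IZR (- Int_part (- x)) < 0) by (apply IZR_lt; lia).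
    pose proof (pos_INR (Z.to_nat (- Int_part (- x)))). lra.
Qed.

Lemma nceil_pos x : 0 < x -> (1 <= nceil x)%nat.
Proof. intros Hx. apply INR_lt. pose proof (nceil_ge x). simpl; lra. Qed.

Lemma InvQ_zero_support Inv q : isDist q -> InvQ Inv q = 0 -> forall x, 0 < q x -> Inv x = false.
Proof.
  intros Hq HInv x Hx. pose proof Hq as [Hq0 _].
  assert (Hnonneg : forall y, 0 <= q y * indic (Inv y))
    by (intros y; specialize (Hq0 y); unfold indic; destruct (Inv y); lra).
  assert (Hex : ex_series (fun y => q y * indic (Inv y))).
  { apply (ex_series_weighted q _ 1); auto. intros y. unfold indic.
    destruct (Inv y); rewrite ?Rabs_R1, ?Rabs_R0; lra. }
  unfold InvQ in HInv. rewrite series_Series in HInv by auto.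
  destruct (Inv x) eqn:Hinv; auto.
  pose proof (Series_ge_term _ x Hnonneg Hex) as Hterm.
  rewrite HInv, Hinv in Hterm. unfold indic in Hterm. lra.
Qed.

Lemma Loss_Series p L M q : isDist p -> (forall x, 0 <= q x <= 1) ->
  (forall t, 0 <= t <= 1 -> 0 <= L t <= M) -> Loss p L q = Series (fun x => p x * L (q x)).
Proof.
  intros Hp Hq HL. apply series_Series, (ex_series_weighted p _ M); auto.
  intros x. destruct (HL (q x) (Hq x)). rewrite Rabs_right; lra.
Qed.

(* The points whose [q^i]-mass [hatq] redirects to [x*]. *)
Definition lost (hist : list (nat -> R)) (i x : nat) : Prop :=
  0 < nth i hist (fun _ => 0) x /\ ~ inA hist i x.

Section Hatq.
Variables (hist : list (nat -> R)) (xstar i : nat).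
Let qi := nth i hist (fun _ => 0).
Hypothesis Hqi : isDist qi.

Let kept y := if excluded_middle_informative (inA hist i y) then qi y else 0.
Let moved y := if excluded_middle_informative (inA hist i y) then 0 else qi y.

Lemma hatq_split x : hatq hist xstar i x = kept x + if Nat.eq_dec x xstar then Series moved else 0.
Proof.
  assert (Hmoved : ex_series moved).
  { apply (ex_series_Rabs_le _ qi); [|now apply isDist_ex_series].
    intros y. unfold moved. destruct excluded_middle_informative; rewrite ?Rabs_R0; [apply Hqi|].
    rewrite Rabs_right; [lra|apply Rle_ge, Hqi]. }
  unfold hatq. fold qi. rewrite series_Series by auto. reflexivity.
Qed.

Lemma kept_moved_mass x : 0 <= kept x <= qi x /\ 0 <= Series moved /\ kept x + Series moved <= 1.
Proof.
  pose proof Hqi as [Hq0 _].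
  assert (Hmoved : forall y, 0 <= moved y <= qi y)
    by (intros y; unfold moved; destruct excluded_middle_informative; split; auto; lra).
  assert (Hkept : 0 <= kept x <= qi x)
    by (unfold kept; destruct excluded_middle_informative; split; auto; lra).
  set (point := fun y => if Nat.eq_dec y x then kept x else 0).
  assert (Hpoint : forall y, 0 <= point y + moved y <= qi y).
  { intros y. unfold point. destruct (Nat.eq_dec y x) as [->|]; [|pose proof (Hmoved y); lra].
    unfold kept, moved. destruct excluded_middle_informative; split; auto; lra. }
  assert (Hqex : ex_series qi) by now apply isDist_ex_series.
  assert (Hmex : ex_series moved) by (apply (ex_series_Rabs_le _ qi); auto;
    intros y; rewrite Rabs_right; apply Hmoved || apply Rle_ge, Hmoved).
  assert (Hpex : ex_series point).
  { apply (ex_series_Rabs_le _ qi); auto. intros y. unfold point.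
    destruct Nat.eq_dec as [->|]; rewrite ?Rabs_R0; [rewrite Rabs_right; lra|auto]. }
  split; [auto|split].
  - rewrite <- Series_zero. apply Series_le; auto. intros y. pose proof (Hmoved y). lra.
  - rewrite <- (isDist_Series qi Hqi), <- (Series_point x (kept x)).
    fold point. rewrite <- Series_plus by auto. apply Series_le; auto.
Qed.

Lemma hatq_range x : 0 <= hatq hist xstar i x <= 1.
Proof.
  rewrite hatq_split. pose proof (isDist_le_1 qi x Hqi).
  destruct (kept_moved_mass x) as [? [? ?]]. destruct Nat.eq_dec; lra.
Qed.

Lemma hatq_ge_off_lost x : ~ lost hist i x -> qi x <= hatq hist xstar i x.
Proof.
  intros Hlost. rewrite hatq_split. destruct (kept_moved_mass x) as [_ [Hm _]].
  assert (qi x <= kept x).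
  { unfold kept. destruct excluded_middle_informative as [|HA]; [lra|].
    apply Rnot_lt_le. intros Hpos. apply Hlost. now split. }
  destruct Nat.eq_dec; lra.
Qed.

Lemma Loss_hatq_le p L M : isDist p ->
  (forall t, 0 <= t <= 1 -> 0 <= L t <= M) ->
  (forall s t, 0 <= s <= t -> t <= 1 -> L t <= L s) ->
  Loss p L (hatq hist xstar i) <= Loss p L qi + M * Series (fun x => p x * ind (lost hist i x)).
Proof.
  intros Hp HL Hmon. pose proof Hp as [Hp0 _].
  assert (Hqi01 : forall x, 0 <= qi x <= 1) by (intros; now apply isDist_le_1).
  assert (Hex : forall g : nat -> R, (forall x, 0 <= g x <= M) -> ex_series (fun x => p x * g x)).
  { intros g Hg. apply (ex_series_weighted p g M); auto.
    intros x. specialize (Hg x). rewrite Rabs_right; lra. }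
  rewrite (Loss_Series p L M), (Loss_Series p L M) by (auto; apply hatq_range).
  rewrite <- Series_scal_l, <- Series_plus.
  - apply Series_le_ex.
    + apply Hex. intros x. apply HL, hatq_range.
    + apply ex_series_add; [apply Hex; intros x; now apply HL|].
      apply ex_series_scal, (ex_series_weighted p _ 1); auto.
      intros x. pose proof (ind_bounds (lost hist i x)). rewrite Rabs_right; lra.
    + intros x. pose proof (HL _ (hatq_range x)). pose proof (HL _ (Hqi01 x)). specialize (Hp0 x).
      destruct (classic (lost hist i x)) as [Hl|Hl].
      * rewrite ind_true by auto. nra.
      * assert (L (hatq hist xstar i x) <= L (qi x))
          by (apply Hmon; [split; [apply Hqi01|now apply hatq_ge_off_lost]|apply hatq_range]).
        rewrite ind_false by auto. nra.
  - apply Hex. intros x. now apply HL.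
  - apply ex_series_scal, (ex_series_weighted p _ 1); auto.
    intros x. pose proof (ind_bounds (lost hist i x)). rewrite Rabs_right; lra.
Qed.

End Hatq.

Lemma lost_at_most_once hist x n : (n <= length hist)%nat ->
  sum_below (fun i => ind (lost hist i x)) n <= 1.
Proof.
  induction n as [|n IH]; intros Hn; simpl; [lra|].
  destruct (classic (lost hist n x)) as [Hlost|Hlost].
  - rewrite ind_true by auto. rewrite (sum_below_ext _ (fun _ => 0)), sum_below_const; [lra|].
    intros i Hi. apply ind_false. intros [_ HA]. apply HA. exists n. split; [lia|]. apply Hlost.
  - rewrite ind_false by auto. specialize (IH ltac:(lia)). lra.
Qed.

Lemma lost_mass_sum_le_1 p hist : isDist p ->
  sum_below (fun i => Series (fun x => p x * ind (lost hist i x))) (length hist) <= 1.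
Proof.
  intros Hp. pose proof Hp as [Hp0 _].
  assert (Hb : forall x, 0 <= sum_below (fun i => p x * ind (lost hist i x)) (length hist) <= p x).
  { intros x. rewrite sum_below_scal. pose proof (lost_at_most_once hist x _ (le_n _)).
    pose proof (sum_below_nonneg (fun i => ind (lost hist i x)) (length hist)
      (fun i => proj1 (ind_bounds _))).
    specialize (Hp0 x). split; nra. }
  rewrite <- Series_sum_below.
  - rewrite <- (isDist_Series p Hp). apply Series_le; [apply Hb|now apply isDist_ex_series].
  - intros i. apply (ex_series_weighted p _ 1); auto.
    intros x. pose proof (ind_bounds (lost hist i x)). rewrite Rabs_right; lra.
Qed.

Lemma unif_markov n b c : (1 <= n)%nat -> 0 < c -> (forall i, 0 <= b i) -> sum_below b n <= 1 ->
  1 - / (c * INR n) <= Series (fun i => unif n i * ind (b i <= c)).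
Proof.
  intros Hn Hc Hb Hsum. pose proof (lt_0_INR n ltac:(lia)) as Hn0.
  assert (Hic : 0 < / c) by now apply Rinv_0_lt_compat.
  assert (Hind : forall i, 1 + - / c * b i <= ind (b i <= c)).
  { intros i. specialize (Hb i). destruct (classic (b i <= c)) as [Hle|Hgt].
    - rewrite ind_true by auto. nra.
    - rewrite ind_false by auto. assert (c * (/ c * b i) = b i) by (field; lra). nra. }
  pose proof (sum_below_le _ _ n (fun i _ => Hind i)) as Hle.
  rewrite sum_below_plus, sum_below_const, sum_below_scal in Hle.
  assert (/ c * sum_below b n <= / c * 1) by (apply Rmult_le_compat_l; lra).
  rewrite (is_series_unique _ _ (unif_is_series n _ Hn)).
  replace (1 - / (c * INR n)) with ((INR n * 1 + - / c * 1) / INR n) by (field; lra).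
  apply Rmult_le_compat_r; [left; now apply Rinv_0_lt_compat|]. lra.
Qed.

Section Final_draw.
Variables (p : nat -> R) (L : R -> R) (M eps1 target : R) (hist : list (nat -> R)) (xstar : nat).
Hypotheses (Hp : isDist p) (HM : 0 < M) (Heps1 : 0 < eps1)
  (HL : forall t, 0 <= t <= 1 -> 0 <= L t <= M)
  (Hmon : forall s t, 0 <= s <= t -> t <= 1 -> L t <= L s)
  (Hhist : forall h, In h hist -> isDist h /\ Loss p L h <= target - eps1 / 2)
  (Hlen : (1 <= length hist)%nat) (HR : 32 * M / eps1 <= INR (length hist)).

Lemma Loss_hatq_le_target i : (i < length hist)%nat ->
  Series (fun x => p x * ind (lost hist i x)) <= eps1 / (2 * M) ->
  Loss p L (hatq hist xstar i) <= target.
Proof.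
  intros Hi Hsmall.
  destruct (Hhist _ (nth_In hist (fun _ => 0) Hi)) as [Hqi HLq].
  pose proof (Loss_hatq_le hist xstar i Hqi p L M Hp HL Hmon) as Hloss.
  apply Rmult_le_compat_l with (r := M) in Hsmall; [|lra].
  replace (M * (eps1 / (2 * M))) with (eps1 / 2) in Hsmall by (field; lra). lra.
Qed.

Lemma final_draw_success :
  PrAtLeast (fun q => Loss p L q <= target)
    (Draw (unif (length hist)) (fun i => Ret (hatq hist xstar i))) (15/16).
Proof.
  set (b := fun i => Series (fun x => p x * ind (lost hist i x))).
  set (c := eps1 / (2 * M)).
  assert (Hc : 0 < c) by (apply Rdiv_lt_0_compat; lra).
  assert (Hb0 : forall i, 0 <= b i).
  { intros i. apply (Series_weighted_bounds p _ 0 1); auto. intros; apply ind_bounds. }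
  assert (Hfew : / (c * INR (length hist)) <= 1 / 16).
  { assert (16 <= c * INR (length hist)).
    { apply Rle_trans with (c * (32 * M / eps1)); [right; unfold c; field; lra|].
      apply Rmult_le_compat_l; lra. }
    replace (1 / 16) with (/ 16) by field. apply Rinv_le_contravar; lra. }
  pose proof (unif_markov _ b _ Hlen Hc Hb0 (lost_mass_sum_le_1 p hist Hp)) as Hmarkov.
  eapply PrAtLeast_weaken.
  { apply PrAtLeast_Draw; [now apply isDist_unif| |]; intros i;
      [apply PrAtLeast_Ret|apply ind_bounds]. }
  apply Rle_trans with (1 - / (c * INR (length hist))); [lra|].
  eapply Rle_trans; [apply Hmarkov|]. apply Series_le.
  - intros i. unfold unif. destruct (Nat.ltb i (length hist)) eqn:Hi; [|lra].
    apply Nat.ltb_lt in Hi.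
    assert (Hunif : 0 < / INR (length hist)) by (apply Rinv_0_lt_compat, lt_0_INR; lia).
    split; [apply Rmult_le_pos; [lra|apply ind_bounds]|].
    apply Rmult_le_compat_l; [lra|].
    destruct (classic (b i <= c)) as [Hsmall|]; [|rewrite ind_false; auto; apply ind_bounds].
    rewrite !ind_true; [lra|now apply Loss_hatq_le_target|auto].
  - apply (ex_series_weighted _ _ 1); [now apply isDist_unif|].
    intros i. pose proof (ind_bounds (Loss p L (hatq hist xstar i) <= target)).
    rewrite Rabs_right; lra.
Qed.

End Final_draw.

Lemma oracle_answer_spec (Inv : nat -> bool) L Qs orc XP XN qstar :
  is_oracle L Qs orc -> In qstar Qs -> (forall x, 0 < qstar x -> Inv x = false) ->
  (forall x, In x XN -> Inv x = true) ->
  In (orc XP XN) Qs /\ emp_loss L XP (orc XP XN) <= emp_loss L XP qstar.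
Proof.
  intros [Horc _] Hqs HqsInv HXN.
  assert (Hfeas : feasible Qs XN qstar).
  { split; auto. intros x Hx Hpos. specialize (HXN x Hx).
    rewrite HqsInv in HXN; [discriminate|auto]. }
  destruct (Horc XP XN (ex_intro _ qstar Hfeas)) as [[Hin _] Hopt]. auto.
Qed.

Section Rounds.
Variables (Inv : nat -> bool) (orc : list nat -> list nat -> (nat -> R)) (XP : list nat).
Variables (xstar Rn T : nat) (E I : (nat -> R) -> Prop) (a : R).
Hypotheses (Ha : 0 <= a)
  (Horc : forall XN, (forall x, In x XN -> Inv x = true) -> I (orc XP XN))
  (HIdist : forall q, I q -> isDist q)
  (HIret : forall q, I q -> a <= ind (E q))
  (Hfinal : forall hist, length hist = Rn -> (forall h, In h hist -> I h) ->
     PrAtLeast E (Draw (unif Rn) (fun i => Ret (hatq hist xstar i))) a).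

Lemma rounds_PrAtLeast fuel XN hist :
  (forall x, In x XN -> Inv x = true) -> (forall h, In h hist -> I h) ->
  (length hist + fuel = Rn)%nat ->
  PrAtLeast E (rounds Inv orc XP xstar Rn T fuel XN hist) a.
Proof.
  revert XN hist. induction fuel as [|fuel IH]; intros XN hist HXN Hhist Hlen; simpl.
  - apply Hfinal; auto. lia.
  - pose proof (Horc XN HXN) as HIq.
    apply PrAtLeast_draws_const; auto. intros s. destruct forallb.
    + eapply PrAtLeast_weaken; [apply PrAtLeast_Ret|]. auto.
    + apply IH.
      * intros x Hx. apply in_app_or in Hx as [Hx|Hx]; auto. now apply filter_In in Hx.
      * intros h Hh. apply in_app_or in Hh as [Hh|[<-|[]]]; auto.
      * rewrite length_app. simpl. lia.
Qed.

End Rounds.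

Definition representative p L (Qs : list (nat -> R)) qstar t (s : list nat) : Prop :=
  (forall q, In q Qs -> Loss p L q <= emp_loss L s q + t) /\
  emp_loss L s qstar <= Loss p L qstar + t.

Lemma rounds_success p (Inv : nat -> bool) L M Qs orc XP xstar qstar eps1 Rn T :
  isDist p -> 0 < M -> 0 < eps1 ->
  (forall t, 0 <= t <= 1 -> 0 <= L t <= M) ->
  (forall s t, 0 <= s <= t -> t <= 1 -> L t <= L s) ->
  (forall q, In q Qs -> isDist q) -> is_oracle L Qs orc ->
  In qstar Qs -> (forall x, 0 < qstar x -> Inv x = false) ->
  (1 <= Rn)%nat -> 32 * M / eps1 <= INR Rn ->
  PrAtLeast (fun q => Loss p L q <= Loss p L qstar + eps1)
    (rounds Inv orc XP xstar Rn T Rn [] [])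
    (15/16 * ind (representative p L Qs qstar (eps1 / 4) XP)).
Proof.
  intros Hp HM Heps1 HL Hmon HQ Horc Hqs HqsInv HRn HR.
  set (good := representative p L Qs qstar (eps1 / 4) XP).
  set (E := fun q => Loss p L q <= Loss p L qstar + eps1).
  set (I := fun q => In q Qs /\ (good -> Loss p L q <= Loss p L qstar + eps1 / 2)).
  assert (Hgood01 := ind_bounds good).
  apply (rounds_PrAtLeast Inv orc XP xstar Rn T E I); auto; try (intros; simpl; lia || tauto).
  - lra.
  - intros XN HXN. destruct (oracle_answer_spec Inv L Qs orc XP XN qstar) as [Hin Hopt]; auto.
    split; auto. intros [Hgood Hgood_star]. specialize (Hgood _ Hin). lra.
  - intros q [Hin _]. auto.
  - intros q [_ Hq]. destruct (classic good) as [Hg|Hg].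
    + rewrite !ind_true; auto; [lra|]. unfold E. specialize (Hq Hg). lra.
    + rewrite ind_false by auto. pose proof (ind_bounds (E q)). lra.
  - intros hist Hlen Hhist. destruct (classic good) as [Hg|Hg].
    + rewrite ind_true, Rmult_1_r by auto. subst Rn.
      apply (final_draw_success p L M eps1); auto; try lra.
      intros h Hh. destruct (Hhist h Hh) as [Hin Hloss]. split; auto. specialize (Hloss Hg). lra.
    + rewrite ind_false, Rmult_0_r by auto.
      apply PrAtLeast_Draw_const; [now apply isDist_unif| |lra].
      intros i. eapply PrAtLeast_weaken; [apply PrAtLeast_Ret|apply ind_bounds].
Qed.

Lemma representative_prob p L M Qs qstar t n :
  isDist p -> 0 < M -> 0 < t -> (1 <= n)%nat ->
  (forall t, 0 <= t <= 1 -> 0 <= L t <= M) ->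
  (forall q, In q Qs -> isDist q) -> In qstar Qs ->
  1 - (INR (length Qs) + 1) * exp (- INR n * t ^ 2 / (8 * M ^ 2))
    <= Eiid p n (fun s => ind (representative p L Qs qstar t s)).
Proof.
  intros Hp HM Ht Hn HL HQ Hqs.
  set (underestimates := fun q s => emp_loss L s q < Loss p L q - t).
  set (overestimates := fun s => Loss p L qstar + t < emp_loss L s qstar).
  replace (INR (length Qs) + 1) with (INR (length (map underestimates Qs ++ [overestimates])))
    by (rewrite length_app, length_map, plus_INR; reflexivity).
  apply Eiid_union_bound; auto.
  - intros e He. apply in_app_or in He as [He|[<-|[]]].
    + apply in_map_iff in He as [q [<- Hq]]. unfold underestimates.
      rewrite (Loss_Series p L M) by (auto; intros; now apply isDist_le_1, HQ).
      apply (emp_mean_below_tail p (fun x => L (q x))); auto.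
      intros x. apply HL, isDist_le_1, HQ, Hq.
    + unfold overestimates.
      rewrite (Loss_Series p L M) by (auto; intros; now apply isDist_le_1, HQ).
      apply (emp_mean_above_tail p (fun x => L (qstar x))); auto.
      intros x. apply HL, isDist_le_1, HQ, Hqs.
  - intros s Hrep.
    destruct (classic (forall q, In q Qs -> Loss p L q <= emp_loss L s q + t)) as [Hall|Hall].
    + exists overestimates. split; [apply in_or_app; right; now left|].
      unfold overestimates. apply Rnot_le_lt. intros Hle. now apply Hrep.
    + apply not_all_ex_not in Hall as [q Hq]. apply imply_to_and in Hq as [Hin Hq].
      exists (underestimates q). split; [apply in_or_app; left; now apply in_map|].
      unfold underestimates. apply Rnot_le_lt in Hq. lra.
Qed.

Lemma sample_size_tail_small N M eps P : 2 <= N -> 0 < M -> 0 < eps ->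
  1024 * M ^ 2 / eps ^ 2 * ln N <= P ->
  (N + 1) * exp (- P * (eps / 4) ^ 2 / (8 * M ^ 2)) <= 1 / 15.
Proof.
  intros HN HM Heps HP.
  assert (Hexp : exp (- P * (eps / 4) ^ 2 / (8 * M ^ 2)) <= / N ^ 8).
  { rewrite <- (exp_ln (N ^ 8)), <- exp_Ropp by (apply pow_lt; lra).
    apply exp_le_compat. rewrite ln_pow by lra.
    apply Rmult_le_compat_r with (r := eps ^ 2) in HP; [|nra].
    replace (1024 * M ^ 2 / eps ^ 2 * ln N * eps ^ 2) with (1024 * M ^ 2 * ln N) in HP
      by (field; lra).
    apply Rmult_le_reg_r with (128 * M ^ 2); [nra|].
    replace (- P * (eps / 4) ^ 2 / (8 * M ^ 2) * (128 * M ^ 2)) with (- (P * eps ^ 2))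
      by (field; lra).
    simpl INR. nra. }
  assert (HN8 : 15 * (N + 1) <= N ^ 8).
  { assert (2 ^ 7 <= N ^ 7) by (apply pow_incr; lra).
    replace (N ^ 8) with (N ^ 7 * N) by ring. nra. }
  pose proof (exp_pos (- P * (eps / 4) ^ 2 / (8 * M ^ 2))).
  assert (HN8pos : 0 < N ^ 8) by (apply pow_lt; lra).
  apply Rmult_le_compat_l with (r := N + 1) in Hexp; [|lra].
  apply Rle_trans with ((N + 1) * / N ^ 8); auto.
  apply (Rmult_le_reg_r (N ^ 8)); auto. rewrite Rmult_assoc, Rinv_l; lra.
Qed.

Theorem lemma2 :
  exists C1 C2 : R, 0 < C1 /\ 0 < C2 /\
  forall (p : nat -> R) (Inv : nat -> bool) (M : R) (L : R -> R)
         (Qs : list (nat -> R)) (orc : list nat -> list nat -> (nat -> R))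
         (xstar : nat) (qstar : nat -> R) (eps1 eps2 : R),
    isDist p ->
    (forall x, 0 < p x -> Inv x = false) ->
    0 < M ->
    (forall t, 0 <= t <= 1 -> 0 <= L t <= M) ->
    (forall s t, 0 <= s <= t -> t <= 1 -> L t <= L s) ->
    (forall q, In q Qs -> isDist q) ->
    NoDup Qs ->
    (2 <= length Qs)%nat ->
    (exists q, In q Qs /\ InvQ Inv q = 0) ->
    In qstar Qs -> InvQ Inv qstar = 0 ->
    (forall q, In q Qs -> InvQ Inv q = 0 -> Loss p L qstar <= Loss p L q) ->
    is_oracle L Qs orc ->
    Inv xstar = false ->
    0 < eps1 -> 0 < eps2 ->
    let Rn := nceil (32 * M / eps1) in
    let P := nceil (C1 * M ^ 2 / eps1 ^ 2 * ln (INR (length Qs))) in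
    let T := nceil (C2 * INR Rn / eps2 * ln (INR (length Qs))) in
    exists v,
      PrEv (fun qhat => Loss p L qhat <= Loss p L qstar + eps1)
           (algorithm1 p Inv orc xstar P Rn T) v
      /\ 7 / 8 <= v.
Proof.
  exists 1024, 1. split; [lra|]. split; [lra|].
  intros p Inv M L Qs orc xstar qstar eps1 eps2 Hp _ HM HL Hmon HQ _ HQlen _ Hqs HqsInv _ Horc _
    Heps1 _ Rn P T.
  set (N := INR (length Qs)).
  set (good := representative p L Qs qstar (eps1 / 4)).
  assert (HN : 2 <= N) by (apply (le_INR 2) in HQlen; exact HQlen).
  assert (HlnN : 0 < ln N) by (rewrite <- ln_1; apply ln_increasing; lra).
  assert (HRn : 32 * M / eps1 <= INR Rn) by apply nceil_ge.
  assert (HP : 1024 * M ^ 2 / eps1 ^ 2 * ln N <= INR P) by apply nceil_ge.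
  assert (HRn1 : (1 <= Rn)%nat) by (apply nceil_pos, Rdiv_lt_0_compat; lra).
  assert (HP1 : (1 <= P)%nat)
    by (apply nceil_pos, Rmult_lt_0_compat; auto; apply Rdiv_lt_0_compat; nra).
  assert (Hsuccess : PrAtLeast (fun qhat => Loss p L qhat <= Loss p L qstar + eps1)
    (algorithm1 p Inv orc xstar P Rn T) (Eiid p P (fun s => 15/16 * ind (good s)))).
  { apply PrAtLeast_draws; auto.
    - intros s _. apply (rounds_success p Inv L M); auto.
      exact (InvQ_zero_support Inv qstar (HQ _ Hqs) HqsInv).
    - intros s. pose proof (ind_bounds (good s)). lra. }
  destruct Hsuccess as [v [Hv [Hle _]]]. exists v. split; [exact Hv|].
  rewrite Eiid_scal in Hle.
  pose proof (representative_prob p L M Qs qstar (eps1 / 4) P Hp HM ltac:(lra) HP1 HL HQ Hqs).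
  pose proof (sample_size_tail_small N M eps1 (INR P) HN HM Heps1 HP).
  unfold N, good in *. lra.
Qed.
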